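(* Let $p>2$ be a prime, $n\ge1$, $A$ a finite abelian $p$-group and $G$ a group containing $A$ as a normal subgroup with $G/A\cong\mathbb{Z}_{p^n}$, generated by the image of an element $t\in G$. If $[e]_\varphi$ is a subgroup of $G$ for every $\varphi\in{\rm Aut}\,G$, then $t^{-1}at=a$ for every $a\in\Omega_1(A)$.
   Context: For an automorphism $\varphi$ of $G$, $[e]_\varphi=\{z^{-1}\varphi(z)\mid z\in G\}$. $\Omega_k(A)=\{a\in A\mid a^{p^k}=e\}$. *)

From HB Require Import structures.
From mathcomp Require Import all_boot all_fingroup all_solvable.
Set Implicit Arguments. Unset Strict Implicit. Unset Printing Implicit Defensive.
Local Open Scope group_scope.

Definition eclass (gT : finGroupType) (G : {set gT}) (phi : {perm gT}) : {set gT} :=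
  [set z^-1 * phi z | z in G].

Definition Omega (gT : finGroupType) (p k : nat) (A : {set gT}) : {set gT} :=
  [set a in A | a ^+ (p ^ k) == 1].

From HB Require Import structures.
From mathcomp Require Import all_boot all_fingroup all_solvable.
Set Implicit Arguments. Unset Strict Implicit. Unset Printing Implicit Defensive.
Local Open Scope group_scope.

(* Suppose t acts nontrivially on Omega_1(A).  As G is a p-group, iterating
   commutators with t yields a in Omega_1(A) with c = [a, t] <> 1 and c^t = c.
   Put v(k) = t^-k (t a)^k = a^k c^C(k,2).  Since p is odd, v(p^n) = 1, so v(k)
   only depends on the coset x A = (t A)^k, and x |-> x v(k) is an automorphism
   phi of G with [e]_phi = { v(k) }.  This set contains a = v(1) and a^2 c = v(2)
   but not c: conjugating c = a^k c^C(k,2) by t forces c^k = 1, hence p | k and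
   then c = 1.  So [e]_phi is not a subgroup. *)

Lemma dvdn_bin2 p k : prime p -> (2 < p)%N -> (p %| k)%N -> (p %| 'C(k, 2))%N.
Proof.
move=> p_pr p_gt2 p_k; have p_odd : odd p by case: (even_prime p_pr) p_gt2 => ->.
by rewrite -(@Gauss_dvdr p 2) ?coprimen2 // -mul_bin_diag bin1 dvdn_mulr.
Qed.

Lemma expg_eq1_dvdn (gT : finGroupType) (x : gT) m k :
  x ^+ m = 1 -> (m %| k)%N -> x ^+ k = 1.
Proof.
move=> xm1 m_k; apply/eqP; rewrite -order_dvdn (dvdn_trans _ m_k) //.
by rewrite order_dvdn xm1.
Qed.

Lemma conjg_coset_abelian (gT : finGroupType) (A : {group gT}) x y u :
  abelian A -> x \in 'N(A) -> y \in 'N(A) -> coset A x = coset A y ->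
  u \in A -> u ^ x = u ^ y.
Proof.
move=> abA Nx Ny /(kercoset_rcoset Nx Ny) [z zA ->] uA.
by rewrite conjgM; congr (_ ^ y); apply/conjg_fixP/commgP/(centsP abA).
Qed.

Lemma commg_mem_norm (gT : finGroupType) (A : {group gT}) a t :
  t \in 'N(A) -> a \in A -> [~ a, t] \in A.
Proof. by move=> Nt aA; rewrite groupM ?groupV // memJ_norm. Qed.

Lemma commXg_abelian (gT : finGroupType) (A : {group gT}) a t k :
  abelian A -> t \in 'N(A) -> a \in A -> [~ a ^+ k, t] = [~ a, t] ^+ k.
Proof. by move=> abA Nt aA; apply/commXg/(centsP abA)/commg_mem_norm. Qed.

Definition twisted_power (gT : finGroupType) (t a : gT) (k : nat) : gT :=
  (t ^+ k)^-1 * (t * a) ^+ k.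

Section TwistedPower.

Variables (gT : finGroupType) (t a : gT).
Local Notation tw := (twisted_power t a).

Lemma twisted_power0 : tw 0 = 1.
Proof. by rewrite /twisted_power !expg0 invg1 mulg1. Qed.

Lemma twisted_power1 : tw 1 = a.
Proof. by rewrite /twisted_power !expg1 mulKg. Qed.

Lemma twisted_powerD i j : tw (i + j) = tw i ^ (t ^+ j) * tw j.
Proof. by rewrite /twisted_power !expgD invMg conjgE !mulgA mulgK. Qed.

Lemma twisted_powerS k : tw k.+1 = tw k ^ t * a.
Proof. by rewrite -addn1 twisted_powerD twisted_power1 expg1. Qed.

Lemma twisted_power_mod N k : tw N = 1 -> tw (k %% N) = tw k.
Proof.
move=> twN1; have tN : (t * a) ^+ N = t ^+ N.
  by apply/eqP; rewrite eq_sym eq_mulVg1; apply/eqP.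
rewrite [in RHS](divn_eq k N) /twisted_power !expgD mulnC !expgM tN -expgM.
by rewrite invMg -mulgA mulKg.
Qed.

Lemma twisted_power_mem (A : {group gT}) k :
  t \in 'N(A) -> a \in A -> tw k \in A.
Proof.
move=> Nt aA; elim: k => [|k IHk]; first by rewrite twisted_power0 group1.
by rewrite twisted_powerS groupM // memJ_norm.
Qed.

Lemma twisted_powerE (A : {group gT}) k :
    abelian A -> t \in 'N(A) -> a \in A -> [~ a, t] ^ t = [~ a, t] ->
  tw k = a ^+ k * [~ a, t] ^+ 'C(k, 2).
Proof.
move=> abA Nt aA ct; set c := [~ a, t] in ct *.
have cA : c \in A by rewrite commg_mem_norm.
have cac : commute a c by apply: (centsP abA).
have aJt : a ^ t = a * c by rewrite mulKVg.
elim: k => [|k IHk]; first by rewrite twisted_power0 mulg1.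
rewrite twisted_powerS IHk conjMg !conjXg ct aJt.
rewrite expgMn // binS bin1 expgSr expgD -!mulgA; congr (_ * _).
by rewrite mulgA -!expgD addnC (commuteX _ cac).
Qed.

End TwistedPower.

Section TwistAutomorphism.

Variables (gT : finGroupType) (G A : {group gT}) (t a : gT).
Hypotheses (abA : abelian A) (nsAG : A <| G) (tG : t \in G) (aA : a \in A).
Hypothesis defGA : G / A = <[coset A t]>.
Hypothesis twisted_power_order : twisted_power t a #[coset A t] = 1.

Local Notation N := #[coset A t].
Local Notation tw := (twisted_power t a).

Let sAG : A \subset G := normal_sub nsAG.
Let nAG : {in G, forall x, x \in 'N(A)} := subsetP (normal_norm nsAG).
Let Nt : t \in 'N(A) := nAG tG.

Definition coset_exponent x : nat :=
  oapp val 0%N [pick i : 'I_N | coset A x == coset A t ^+ i].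

Lemma coset_exponentP x : x \in G -> coset A x = coset A t ^+ coset_exponent x.
Proof.
move=> xG; rewrite /coset_exponent; case: pickP => [i /eqP //| no_i] /=.
have := mem_quotient A xG; rewrite defGA => /cyclePmin [i lt_i_N def_x].
by have := no_i (Ordinal lt_i_N); rewrite /= def_x eqxx.
Qed.

Lemma coset_exponent_lt x : (coset_exponent x < N)%N.
Proof. by rewrite /coset_exponent; case: pickP => [i|] //= _; rewrite order_gt0. Qed.

Lemma twisted_power_coset_exponent x k :
  x \in G -> coset A x = coset A t ^+ k -> tw (coset_exponent x) = tw k.
Proof.
move=> xG def_x; rewrite -(twisted_power_mod k twisted_power_order).
rewrite -(twisted_power_mod (coset_exponent x) twisted_power_order).
move: def_x; rewrite coset_exponentP // => /eqP.
by rewrite eq_expg_mod_order => /eqP ->.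
Qed.

Definition twist x := x * tw (coset_exponent x).

Lemma twistM : {in G &, {morph twist : x y / x * y}}.
Proof.
move=> x y xG yG; rewrite /twist.
set i := coset_exponent x; set j := coset_exponent y.
have def_y : coset A y = coset A (t ^+ j) by rewrite morphX // coset_exponentP.
have -> : tw (coset_exponent (x * y)) = tw (i + j).
  apply: twisted_power_coset_exponent; first by rewrite groupM.
  by rewrite morphM ?nAG // expgD -!coset_exponentP.
rewrite twisted_powerD -(conjg_coset_abelian abA (nAG yG)) ?groupX //;
  last exact: twisted_power_mem.
by move: (tw i) (tw j) => u v; rewrite conjgE !mulgA mulgK.
Qed.

Canonical twist_morphism := Morphism twistM.

Lemma injm_twist : 'injm twist_morphism.
Proof.
apply/injmP => x y xG yG /= eq_xy.
have eq_coset : coset A x = coset A y.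
  by have := congr1 (coset A) eq_xy; rewrite /twist !coset_kerr ?twisted_power_mem.
have eq_exp : coset_exponent x = coset_exponent y by rewrite /coset_exponent eq_coset.
by move: eq_xy; rewrite /twist eq_exp => /mulIg.
Qed.

Lemma im_twist : twist_morphism @* G = G.
Proof.
apply/eqP; rewrite eqEcard card_injm ?injm_twist // leqnn andbT.
apply/subsetP => _ /morphimP [x _ xG ->] /=.
by rewrite groupM // (subsetP sAG) // twisted_power_mem.
Qed.

Definition twist_aut := aut injm_twist im_twist.

Lemma eclass_twist_aut : eclass G twist_aut = [set tw i | i : 'I_N].
Proof.
apply/setP => y; apply/imsetP/imsetP => [[z zG ->] | [i _ ->]].
  rewrite autE //= /twist mulKg.
  by exists (Ordinal (coset_exponent_lt z)).
exists (t ^+ i); first by rewrite groupX.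
rewrite autE ?groupX //= /twist mulKg (@twisted_power_coset_exponent _ i) ?groupX //.
by rewrite morphX.
Qed.

End TwistAutomorphism.

Lemma twisted_power_neq_commg (gT : finGroupType) (A : {group gT}) p t a k :
    prime p -> (2 < p)%N -> abelian A -> t \in 'N(A) -> a \in A -> a ^+ p = 1 ->
    [~ a, t] != 1 -> [~ a, t] ^ t = [~ a, t] ->
  twisted_power t a k != [~ a, t].
Proof.
move=> p_pr p_gt2 abA Nt aA ap1 c_neq1 ct.
have cp1 : [~ a, t] ^+ p = 1 by rewrite -(commXg_abelian _ abA) // ap1 comm1g.
set c := [~ a, t] in c_neq1 ct cp1 *.
have cac : commute a c by apply/(centsP abA)/commg_mem_norm.
have aJt : a ^ t = a * c by rewrite mulKVg.
apply/eqP; rewrite (twisted_powerE _ abA) // -/c => def_c.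
have ak_cyclic : a ^+ k = c * (c ^+ 'C(k, 2))^-1 by rewrite -{1}def_c mulgK.
have ck1 : c ^+ k = 1.
  apply: (mulgI (a ^+ k)); rewrite mulg1 -expgMn // -aJt -conjXg.
  by rewrite ak_cyclic conjMg conjVg conjXg ct.
have p_k : (p %| k)%N.
  have <- : #[c] = p by apply/prime_nt_dvdP; rewrite ?order_eq1 ?order_dvdn ?cp1.
  by rewrite order_dvdn ck1.
move/eqP: c_neq1; rewrite -def_c (expg_eq1_dvdn ap1 p_k).
by rewrite (expg_eq1_dvdn cp1 (dvdn_bin2 p_pr p_gt2 p_k)) mulg1.
Qed.

Lemma Aut_eclass_not_group (gT : finGroupType) (G A : {group gT}) p t a :
    prime p -> (2 < p)%N -> abelian A -> A <| G -> t \in G ->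
    G / A = <[coset A t]> -> (p %| #[coset A t])%N ->
    a \in A -> a ^+ p = 1 -> [~ a, t] != 1 -> [~ a, t] ^ t = [~ a, t] ->
  exists2 phi, phi \in Aut G & ~~ group_set (eclass G phi).
Proof.
move=> p_pr p_gt2 abA nsAG tG defGA p_N aA ap1 c_neq1 ct.
have Nt : t \in 'N(A) := subsetP (normal_norm nsAG) t tG.
have cp1 : [~ a, t] ^+ p = 1 by rewrite -(commXg_abelian _ abA) // ap1 comm1g.
have tw_order : twisted_power t a #[coset A t] = 1.
  rewrite (twisted_powerE _ abA) // (expg_eq1_dvdn ap1 p_N).
  by rewrite (expg_eq1_dvdn cp1 (dvdn_bin2 p_pr p_gt2 p_N)) mulg1.
exists (twist_aut abA nsAG tG aA defGA tw_order); first exact: Aut_aut.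
rewrite eclass_twist_aut; apply/negP => S_group; pose H := Group S_group.
have N_gt2 : (2 < #[coset A t])%N := leq_trans p_gt2 (dvdn_leq (order_gt0 _) p_N).
have twH k : (k < #[coset A t])%N -> twisted_power t a k \in H.
  by move=> lt_k; apply/imsetP; exists (Ordinal lt_k).
have aH : a \in H by rewrite -(twisted_power1 t a) twH // ltnW.
have := twH 2 N_gt2; rewrite (twisted_powerE _ abA) // expg1 => a2cH.
have : a^-1 * (a^-1 * (a ^+ 2 * [~ a, t])) \in H.
  by rewrite groupM ?groupV // groupM ?groupV.
rewrite expgS expg1 -mulgA !mulKg.
case/imsetP=> i _ /esym; apply/eqP.
exact: (twisted_power_neq_commg _ p_pr p_gt2 abA).
Qed.

Lemma nilpotent_commg_last (gT : finGroupType) (G : {group gT}) (S : {set gT}) t x :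
    nilpotent G -> t \in G -> x \in G -> x \in S ->
    {in S, forall y, [~ y, t] \in S} -> [~ x, t] != 1 ->
  exists2 y, y \in S & [~ y, t] != 1 /\ [~ y, t, t] = 1.
Proof.
move=> nilG tG xG xS commS cxt1.
pose w k := iter k (fun y => [~ y, t]) x.
have wS k : w k \in S by elim: k => //= k; apply: commS.
have wL k : w k \in 'L_k.+1(G).
  by elim: k => [|k IHk]; [rewrite lcn1 | rewrite lcnSn mem_commg].
have w_end : w (nil_class G).+2 == 1.
  have := wL (nil_class G).+2.
  by rewrite (lcn_nil_classP _ nilG (leqW (leqnSn _))) => /set1P ->.
case: (ex_minnP (ex_intro (fun k => w k.+2 == 1) _ w_end)) => k /eqP wk2 k_min.
exists (w k) => //; split => //.
case: k wk2 k_min => [//|k] _ k_min; by apply/negP => /k_min; rewrite ltnn.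
Qed.

Lemma commg_Omega (gT : finGroupType) (A : {group gT}) p k t :
  abelian A -> t \in 'N(A) -> {in Omega p k A, forall y, [~ y, t] \in Omega p k A}.
Proof.
move=> abA Nt y; rewrite !inE => /andP [yA /eqP yp1].
by rewrite commg_mem_norm // -(commXg_abelian _ abA) // yp1 comm1g eqxx.
Qed.

Theorem mainTheorem11 (gT : finGroupType) (p n : nat) (G A : {group gT}) (t : gT) :
  prime p -> (2 < p)%N -> (1 <= n)%N ->
  abelian A -> p.-group A -> A <| G ->
  t \in G -> G / A = <[coset A t]> -> #|G / A| = (p ^ n)%N ->
  (forall phi, phi \in Aut G -> group_set (eclass G phi)) ->
  forall a, a \in Omega p 1 A -> a ^ t = a.
Proof.
move=> p_pr p_gt2 n_gt0 abA pA nsAG tG defGA oGA eclass_group a0 a0_Omega.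
apply/conjg_fixP; apply: contraT => a0t.
have nAG := normal_norm nsAG; have Nt := subsetP nAG t tG.
have a0G : a0 \in G by rewrite (subsetP (normal_sub nsAG)) //; case/setIdP: a0_Omega.
have pG : p.-group G.
  by rewrite -(pquotient_pgroup pA nAG) /pgroup oGA pnatX pnat_id.
have [a] := nilpotent_commg_last (pgroup_nil pG) tG a0G a0_Omega
  (commg_Omega abA Nt) a0t.
rewrite inE expn1 => /andP [aA /eqP ap1] [cat1 /eqP/conjg_fixP ct].
have p_N : (p %| #[coset A t])%N by rewrite /order -defGA oGA dvdn_exp.
have [phi phi_Aut] :=
  Aut_eclass_not_group p_pr p_gt2 abA nsAG tG defGA p_N aA ap1 cat1 ct.
by rewrite eclass_group.
Qed.
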